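(* Let $\mathit{VI}$ be a finite set of variables with $\#\mathit{VI}=n$ and $k\in\mathbb{N}$ with $1\le k\le n$. Then the set of meet-irreducible elements of the lattice $\mathit{TSD}_k$ is $\mathrm{MI}(\mathit{TSD}_k)=\{\mathit{SG}\}\cup\mathrm{dAtoms}(\mathit{TSD}_k)\cup M_k$, where $\mathrm{dAtoms}(\mathit{TSD}_k)=\{\mathit{SG}\setminus\{S\}\mid S\in\mathit{SG},\ \#S\le k\}$ and $M_k=\{\,\mathit{SG}\setminus\{U\in\mathit{SG}\mid T\subseteq U\subseteq S\}\mid T,S\in\mathit{SG},\ T\subsetneq S,\ \#T=k\,\}$.
   Context: $\mathit{SG}=\wp(\mathit{VI})\setminus\{\emptyset\}$, $\mathit{SH}=\wp(\mathit{SG})$. $\rho_{\mathit{TSD}_k}(sh)=\{\,S\in\mathit{SG}\mid \forall T\subseteq S:\ \#T<k\implies S=\bigcup\{U\in sh\mid T\subseteq U\subseteq S\}\,\}$ is an upper closure operator on $\mathit{SH}$ and $\mathit{TSD}_k=\rho_{\mathit{TSD}_k}(\mathit{SH})$, a complete lattice ordered by inclusion with meet given by intersection and top $\mathit{SG}$. An element $x$ of a complete lattice $C$ is meet-irreducible if for all $y,z\in C$, $x=y\wedge z$ implies $x=y$ or $x=z$; $\mathrm{MI}(C)$ is the set of such elements. A dual-atom is $x\ne\top$ such that $x\le y<\top$ implies $x=y$; $\mathrm{dAtoms}(C)$ is the set of dual-atoms. *)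

From mathcomp Require Import all_boot all_order.
Set Implicit Arguments. Unset Strict Implicit. Unset Printing Implicit Defensive.

Section TSD.
Variable VI : finType.

Definition SG : {set {set VI}} := [set S : {set VI} | S != set0].

Definition inSH (sh : {set {set VI}}) : bool := sh \subset SG.

Definition rhoTSD (k : nat) (sh : {set {set VI}}) : {set {set VI}} :=
  [set S in SG | [forall T : {set VI},
     ((T \subset S) && (#|T| < k)) ==>
     (S == \bigcup_(U in sh | (T \subset U) && (U \subset S)) U)]].

Definition inTSD (k : nat) (x : {set {set VI}}) : Prop :=
  exists sh, inSH sh /\ x = rhoTSD k sh.

(* meet-irreducible elements of TSD_k (meet in TSD_k is intersection) *)
Definition meet_irreducible (k : nat) (x : {set {set VI}}) : Prop :=
  inTSD k x /\
  forall y z, inTSD k y -> inTSD k z -> x = y :&: z -> x = y \/ x = z.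

Definition dual_atom (k : nat) (x : {set {set VI}}) : Prop :=
  inTSD k x /\ x <> SG /\
  forall y, inTSD k y -> x \subset y -> y <> SG -> x = y.

Definition inMk (k : nat) (x : {set {set VI}}) : Prop :=
  exists T S : {set VI}, [/\ T \in SG, S \in SG, T \proper S, #|T| = k &
    x = SG :\: [set U in SG | (T \subset U) && (U \subset S)]].

End TSD.

From mathcomp Require Import all_boot all_order.
From Stdlib Require Import Setoid.
Set Implicit Arguments. Unset Strict Implicit. Unset Printing Implicit Defensive.

(* Elements of TSD_k are the families x of nonempty sets closed under the rule:
   S enters x as soon as, for every T ⊆ S with #T < k and every b ∈ S, some
   U ∈ x satisfies T ⊆ U ⊆ S and b ∈ U.  If T is nonempty and #T <= k, the
   complement in SG of the interval [T, S] is closed.  Every closed x is the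
   intersection of such co-intervals, one for each S ∈ SG \ x: if S fails the
   rule at (T, b), take [S, S] when #S <= k, and otherwise [B, S] for some
   B of size k containing T and b.  So a meet-irreducible x is SG or one of
   these co-intervals; conversely they are all meet-irreducible, since every
   closed family strictly above one contains the top S of its interval. *)

Lemma exists_set_between (T : finType) (A C : {set T}) m :
  A \subset C -> #|A| <= m -> m <= #|C| ->
  exists B : {set T}, [/\ A \subset B, B \subset C & #|B| = m].
Proof.
move=> AC; elim: m => [|m IHm] Am mC.
  by exists A; split=> //; apply/eqP; rewrite -leqn0.
have [Am1|Am1] := eqVneq #|A| m.+1; first by exists A.
have [B [AB BC Bm]] : exists B : {set T}, [/\ A \subset B, B \subset C & #|B| = m].
  by apply: IHm (ltnW mC); rewrite -ltnS ltn_neqAle Am1 Am.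
have /subsetPn [c cC cB] : ~~ (C \subset B).
  by apply: contraTN mC => /subset_leq_card; rewrite Bm -ltnNge.
exists (c |: B); split; first exact: subset_trans AB (subsetUr _ _).
  by rewrite subUset sub1set cC.
by rewrite cardsU1 cB Bm.
Qed.

Lemma cardsU1_leq (T : finType) (b : T) (A : {set T}) : #|b |: A| <= #|A|.+1.
Proof. by rewrite cardsU1 -add1n leq_add2r leq_b1. Qed.

Section TSD.
Variable VI : finType.
Variable k : nat.

Local Notation SG := (SG VI).

Lemma in_SG (S : {set VI}) : (S \in SG) = (S != set0).
Proof. by rewrite inE. Qed.

Lemma SG_supset (T S : {set VI}) : T \subset S -> T \in SG -> S \in SG.
Proof. by rewrite !in_SG => TS; apply: contraNneq => S0; rewrite -subset0 -S0. Qed.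

Definition covered (x : {set {set VI}}) (S : {set VI}) : bool :=
  [forall T : {set VI}, forall b in S, (T \subset S) && (#|T| < k) ==>
     [exists U in x, [&& T \subset U, U \subset S & b \in U]]].

Lemma coveredP (x : {set {set VI}}) (S : {set VI}) :
  reflect (forall (T : {set VI}) (b : VI), T \subset S -> #|T| < k -> b \in S ->
             exists2 U : {set VI}, U \in x & [/\ T \subset U, U \subset S & b \in U])
          (covered x S).
Proof.
apply: (iffP forallP) => [cov T b TS Tk bS | cov T].
  have /forall_inP /(_ b bS) := cov T; rewrite TS Tk.
  by case/exists_inP => U Ux /and3P[]; exists U.
apply/forall_inP => b bS; apply/implyP => /andP[TS Tk].
have [U Ux [TU US bU]] := cov T b TS Tk bS.
by apply/exists_inP; exists U => //; apply/and3P.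
Qed.

Lemma covered_mem (x : {set {set VI}}) (S : {set VI}) : S \in x -> covered x S.
Proof. by move=> Sx; apply/coveredP => T b TS _ bS; exists S. Qed.

Lemma covered_trans (x y : {set {set VI}}) (S : {set VI}) :
  {in y, forall U, covered x U} -> covered y S -> covered x S.
Proof.
move=> yx /coveredP cov; apply/coveredP => T b TS Tk bS.
have [U /yx /coveredP covU [TU US bU]] := cov T b TS Tk bS.
have [V Vx [TV VU bV]] := covU T b TU Tk bU.
by exists V => //; split=> //; apply: subset_trans US.
Qed.

Lemma coveredS (x y : {set {set VI}}) (S : {set VI}) :
  x \subset y -> covered x S -> covered y S.
Proof. by move=> xy; apply: covered_trans => U /(subsetP xy); apply: covered_mem. Qed.

Lemma mem_rhoTSD (sh : {set {set VI}}) (S : {set VI}) :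
  (S \in rhoTSD k sh) = (S \in SG) && covered sh S.
Proof.
rewrite inE; congr andb; apply/forallP/coveredP => [rho T b TS Tk bS | cov T].
  have := rho T; rewrite TS Tk => /eqP SE.
  move: bS; rewrite {1}SE => /bigcupP[U /andP[Ush /andP[TU US]] bU].
  by exists U.
apply/implyP => /andP[TS Tk]; rewrite eqEsubset; apply/andP; split.
  apply/subsetP => b bS; have [U Ush [TU US bU]] := cov T b TS Tk bS.
  by apply/bigcupP; exists U; rewrite ?Ush ?TU.
by apply/bigcupsP => U /andP[_ /andP[_]].
Qed.

Definition closed (x : {set {set VI}}) : Prop :=
  x \subset SG /\ {in SG, forall S, covered x S -> S \in x}.

Lemma inTSDP (x : {set {set VI}}) : inTSD k x <-> closed x.
Proof.
split=> [[sh [_ ->]] | [xSG xcl]].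
  split; first by apply/subsetP => S; rewrite mem_rhoTSD => /andP[].
  move=> S SG_S cov; rewrite mem_rhoTSD SG_S.
  by apply: covered_trans cov => U; rewrite mem_rhoTSD => /andP[].
exists x; split=> //; apply/setP => S; rewrite mem_rhoTSD.
apply/idP/andP => [Sx | [SG_S /xcl]]; last exact.
by split; [apply: (subsetP xSG) | apply: covered_mem].
Qed.

Lemma closedT : closed SG.
Proof. by split. Qed.

Lemma closedI (x y : {set {set VI}}) : closed x -> closed y -> closed (x :&: y).
Proof.
move=> [xSG xcl] [_ ycl]; split; first exact: subset_trans (subsetIl _ _) xSG.
move=> S SG_S cov; rewrite inE xcl ?ycl //.
  by apply: coveredS cov; apply: subsetIr.
by apply: coveredS cov; apply: subsetIl.
Qed.

Definition itv (T S : {set VI}) : {set {set VI}} :=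
  [set U in SG | (T \subset U) && (U \subset S)].

Definition cointerval (T S : {set VI}) : {set {set VI}} := SG :\: itv T S.

Lemma mem_cointerval (T S U : {set VI}) :
  (U \in cointerval T S) = (U \in SG) && ~~ ((T \subset U) && (U \subset S)).
Proof. by rewrite in_setD [U \in itv _ _]inE andbC; case: (U \in SG). Qed.

Lemma cointerval_id (S : {set VI}) : cointerval S S = SG :\ S.
Proof.
apply/setP => U; rewrite !inE -eqEsubset (eq_sym S).
by case: (U != set0); rewrite ?andbT ?andbF.
Qed.

Lemma closed_cointerval (T S : {set VI}) :
  T != set0 -> #|T| <= k -> closed (cointerval T S).
Proof.
move=> /set0Pn[a aT] Tk; split; first exact: subsetDl.
move=> V SG_V /coveredP cov; rewrite mem_cointerval SG_V /=.
apply/negP => /andP[TV VS].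
have Tak : #|T :\ a| < k by rewrite (cardsD1 a) aT in Tk.
have [U] := cov _ a (subset_trans (subsetDl T _) TV) Tak (subsetP TV a aT).
rewrite mem_cointerval => /andP[_ /negP nU] [TaU UV aU]; apply: nU.
by rewrite (subset_trans UV VS) -(setD1K aT) subUset sub1set aU TaU.
Qed.

Lemma closed_SGD1 (S : {set VI}) : S \in SG -> #|S| <= k -> closed (SG :\ S).
Proof. by rewrite in_SG -cointerval_id; apply: closed_cointerval. Qed.

(* [T = S] yields the dual atoms [SG :\ S], [#|T| = k] the family M_k. *)
Definition irr_interval (T S : {set VI}) : bool :=
  [&& T != set0, T \subset S, #|T| <= k & (#|T| == k) || (T == S)].

Lemma separate_cointerval (x : {set {set VI}}) (V : {set VI}) :
  closed x -> V \in SG -> V \notin x ->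
  exists T S, [/\ irr_interval T S, x \subset cointerval T S & V \notin cointerval T S].
Proof.
move=> [xSG xcl] SG_V Vx.
have /forallPn[T /forall_inPn[b bV]] : ~~ covered x V by apply: contra Vx; apply: xcl.
rewrite negb_imply => /andP[/andP[TV Tk] /exists_inPn noU].
have [Vk|kV] := leqP #|V| k.
  exists V, V; rewrite cointerval_id !inE eqxx /=; split=> //.
  - by rewrite /irr_interval -in_SG SG_V subxx Vk eqxx orbT.
  - apply/subsetP => U Ux; rewrite in_setD1 (subsetP xSG) // andbT.
    by apply: contraNneq Vx => <-.
have bTV : b |: T \subset V by rewrite subUset sub1set bV.
have bTk : #|b |: T| <= k := leq_trans (cardsU1_leq b T) Tk.
have [B [bTB BV Bk]] := exists_set_between bTV bTk (ltnW kV).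
exists B, V; split.
- by rewrite /irr_interval BV Bk eqxx leqnn -card_gt0 Bk (leq_ltn_trans (leq0n _) Tk).
- apply/subsetP => U Ux; rewrite mem_cointerval (subsetP xSG) //=.
  apply: contra (noU U Ux) => /andP[BU UV].
  have bTU := subset_trans bTB BU.
  by rewrite (subset_trans (subsetUr _ _) bTU) UV (subsetP bTU) ?setU11.
- by rewrite mem_cointerval SG_V BV subxx.
Qed.

Lemma meet_irreducible_witness (x : {set {set VI}}) (S : {set VI}) :
  closed x -> S \notin x -> (forall y, closed y -> x \proper y -> S \in y) ->
  meet_irreducible k x.
Proof.
move=> cx Sx above; split; first exact/inTSDP.
move=> y z /inTSDP cy /inTSDP cz xE.
have [|xy] := eqVneq x y; first by left.
have [|xz] := eqVneq x z; first by right.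
have x_lt_y : x \proper y by rewrite properEneq xy xE subsetIl.
have x_lt_z : x \proper z by rewrite properEneq xz xE subsetIr.
by case/negP: Sx; rewrite xE inE !above.
Qed.

Lemma meet_irreducibleT : meet_irreducible k SG.
Proof.
split; first exact/inTSDP/closedT.
move=> y z /inTSDP[ySG _] _ E; left.
by apply/eqP; rewrite eqEsubset ySG E subsetIl.
Qed.

Lemma cointerval_meet_irreducible (T S : {set VI}) :
  irr_interval T S -> meet_irreducible k (cointerval T S).
Proof.
case/and4P => T0 TS Tk Tkind.
have SG_S : S \in SG by apply: SG_supset TS _; rewrite in_SG.
apply: (meet_irreducible_witness (S := S)); first exact: closed_cointerval.
  by rewrite mem_cointerval SG_S TS subxx.
move=> y [ySG ycl] /properP[xy [V Vy]]; rewrite mem_cointerval (subsetP ySG) //=.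
rewrite negbK => /andP[TV VS].
apply: ycl SG_S _; apply/coveredP => T' b T'S T'k bS.
have bT'k := leq_trans (cardsU1_leq b T') T'k.
have [TbT'|nTbT'] := boolP (T \subset b |: T').
  have bT'V : b |: T' \subset V.
    case/orP: Tkind => [/eqP Tk_eq | /eqP TS_eq].
      suff <- : T = b |: T' by [].
      by apply/eqP; rewrite eqEcard TbT' Tk_eq.
    have -> : V = S by apply/eqP; rewrite eqEsubset VS -TS_eq.
    by rewrite subUset sub1set bS.
  exists V => //; split => //; first exact: subset_trans (subsetUr _ _) bT'V.
  by apply: (subsetP bT'V); rewrite setU11.
exists (b |: T'); last by rewrite subsetUr subUset sub1set bS T'S setU11.
apply: (subsetP xy); rewrite mem_cointerval (negbTE nTbT') andbT inE.
by apply/set0Pn; exists b; rewrite setU11.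
Qed.

Lemma closed_bigcap (I : eqType) (r : seq I) (F : I -> {set {set VI}}) :
  {in r, forall i, closed (F i)} -> closed (SG :&: \bigcap_(i <- r) F i).
Proof.
elim: r => [|i r IHr] cF; first by rewrite big_nil setIT; apply: closedT.
rewrite big_cons setICA; apply: closedI; first by apply: cF; rewrite mem_head.
by apply: IHr => j rj; apply: cF; rewrite in_cons rj orbT.
Qed.

Lemma meet_irreducible_bigcap (I : eqType) (r : seq I) (F : I -> {set {set VI}})
    (x : {set {set VI}}) :
  meet_irreducible k x -> {in r, forall i, closed (F i)} ->
  x = SG :&: \bigcap_(i <- r) F i -> x = SG \/ exists2 i, i \in r & x = F i.
Proof.
move=> [_ irr]; elim: r => [|i r IHr] cF; first by rewrite big_nil setIT; left.
have cFr : {in r, forall j, closed (F j)}.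
  by move=> j rj; apply: cF; rewrite in_cons rj orbT.
rewrite big_cons setICA => /irr[].
- by apply/inTSDP/cF; rewrite mem_head.
- exact/inTSDP/closed_bigcap.
- by right; exists i; rewrite ?mem_head.
case/(IHr cFr) => [|[j rj xF]]; first by left.
by right; exists j; rewrite ?in_cons ?rj ?orbT.
Qed.

Lemma closed_eq_bigcap (x : {set {set VI}}) :
  closed x ->
  x = SG :&: \bigcap_(p | irr_interval p.1 p.2 && (x \subset cointerval p.1 p.2))
                cointerval p.1 p.2.
Proof.
move=> cx; apply/eqP; rewrite eqEsubset subsetI cx.1; apply/andP; split.
  by apply/bigcapsP => p /andP[].
apply/subsetP => V /setIP[SG_V /bigcapP Vcap]; apply: contraT => Vx.
have [T [S [TS xTS VTS]]] := separate_cointerval cx SG_V Vx.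
by rewrite (Vcap (T, S)) ?TS in VTS.
Qed.

Lemma meet_irreducibleP (x : {set {set VI}}) :
  meet_irreducible k x <->
  x = SG \/ exists T S, irr_interval T S /\ x = cointerval T S.
Proof.
split=> [xMI | [-> | [T [S [TS ->]]]]]; last 2 first.
- exact: meet_irreducibleT.
- exact: cointerval_meet_irreducible.
have cx : closed x by apply/inTSDP; case: xMI.
have xE := closed_eq_bigcap cx; rewrite -big_filter in xE.
case: (meet_irreducible_bigcap xMI _ xE) => [[T S] | -> | [[T S] rTS ->]].
- rewrite mem_filter /= => /andP[/andP[/and4P[T0 _ Tk _] _] _].
  exact: closed_cointerval.
- by left.
- by move: rTS; rewrite mem_filter /= => /andP[/andP[TS _] _]; right; exists T, S.
Qed.

Lemma dual_atomP (x : {set {set VI}}) :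
  dual_atom k x <-> exists S, [/\ S \in SG, #|S| <= k & x = SG :\ S].
Proof.
split=> [[/inTSDP cx [xT max]] | [S [SG_S Sk ->]]].
  have /subsetPn[V SG_V Vx] : ~~ (SG \subset x).
    by apply/negP => SGx; apply: xT; apply/eqP; rewrite eqEsubset cx.1.
  have [T [S [/and4P[T0 TS Tk _] xTS _]]] := separate_cointerval cx SG_V Vx.
  have SG_T : T \in SG by rewrite in_SG.
  exists T; split=> //; apply: max.
  - exact/inTSDP/closed_SGD1.
  - apply: subset_trans xTS _; apply/subsetP => U.
    rewrite mem_cointerval in_setD1 => /andP[-> nU]; rewrite andbT.
    by apply: contraNneq nU => ->; rewrite subxx TS.
  - by move/setP/(_ T); rewrite in_setD1 eqxx SG_T.
split; first exact/inTSDP/closed_SGD1.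
split; first by move/setP/(_ S); rewrite in_setD1 eqxx SG_S.
move=> y /inTSDP[ySG _] Sy yT; apply/eqP; rewrite eqEsubset Sy /=.
apply/subsetP => U Uy; rewrite in_setD1 (subsetP ySG) // andbT.
apply: contra_not_neq yT => US; apply/eqP; rewrite eqEsubset ySG /=.
apply/subsetP => V SG_V; have [-> | VS] := eqVneq V S; first by rewrite -US.
by apply: (subsetP Sy); rewrite in_setD1 VS.
Qed.

Lemma dual_atom_or_Mk (x : {set {set VI}}) :
  dual_atom k x \/ inMk k x <-> exists T S, irr_interval T S /\ x = cointerval T S.
Proof.
split=> [[/dual_atomP[S [SG_S Sk ->]] | [T [S [SG_T _ TS Tk ->]]]] |
         [T [S [/and4P[T0 TsubS Tk Tkind] ->]]]].
- exists S, S; rewrite cointerval_id; split=> //.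
  by rewrite /irr_interval -in_SG SG_S subxx Sk eqxx orbT.
- exists T, S; split=> //.
  by rewrite /irr_interval -in_SG SG_T (proper_sub TS) Tk eqxx leqnn.
have SG_T : T \in SG by rewrite in_SG.
have [TS | TneS] := eqVneq T S.
  by left; apply/dual_atomP; exists S; rewrite -TS cointerval_id.
right; exists T, S; split=> //; first exact: SG_supset TsubS SG_T.
  by rewrite properEneq TneS.
by move: Tkind; rewrite (negbTE TneS) orbF => /eqP.
Qed.

End TSD.

Theorem theorem4p3 (VI : finType) (n k : nat) :
  #|VI| = n -> 1 <= k <= n ->
  (forall x : {set {set VI}},
     meet_irreducible k x <-> x = SG VI \/ dual_atom k x \/ inMk k x) /\
  (forall x : {set {set VI}},
     dual_atom k x <->
     exists S : {set VI}, [/\ S \in SG VI, #|S| <= k & x = SG VI :\ S]).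
Proof.
move=> _ _; split=> x; last exact: dual_atomP.
by rewrite meet_irreducibleP dual_atom_or_Mk.
Qed.
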